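(* Let $X$ be a graph (multiple edges and loops allowed) which is connected, has countable vertex set, has bounded degree, and has no vertex of degree one. Fix $x_0\in VX$. For $x\in VX$ and $k\ge 0$ let $c_k(x)$ be the number of geodesic loops of length $k$ starting at $x$, let $(\Delta_X c_k)(x)=\deg(x)c_k(x)-\sum_{e\in E_x}c_k(t(e))$, and let $N_m(x_0)$ be the number of closed geodesic paths of length $m$ starting at $x_0$. Then for every integer $m>2$, $$N_m(x_0)=c_m(x_0)-(\deg(x_0)-2)\sum_{i=1}^{\lceil m/2\rceil-1}c_{m-2i}(x_0)+\sum_{i=1}^{\lceil m/2\rceil-1}i\,(\Delta_X c_{m-2i})(x_0),$$ where $\lceil\cdot\rceil$ is the ceiling function.
   Context: A graph $X=(VX,EX)$ consists of disjoint sets $VX$, $EX$ with maps $e\mapsto (o(e),t(e))\in VX\times VX$ and $e\mapsto\bar e$ such that $\bar e\ne e$, $\bar{\bar e}=e$, $o(e)=t(\bar e)$. For $x\in VX$, $E_x=\{e\in EX: o(e)=x\}$ and $\deg(x)=|E_x|$; bounded degree means $\sup_x\deg(x)<\infty$. A path of length $n$ is a sequence of edges $c=(e_1,\dots,e_n)$ with $t(e_i)=o(e_{i+1})$; $o(c)=o(e_1)$, $t(c)=t(e_n)$; it is closed if $o(c)=t(c)$; a vertex is regarded as a path of length $0$. It has a back-tracking if $e_{i+1}=\bar e_i$ for some $i$, and has a tail if $e_n=\bar e_1$. A geodesic loop is a closed path without back-tracking; a closed geodesic path is a geodesic loop without tail. ''Starting at $x$'' means $o(c)=x$. *)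

(* The star E_x is given as a duplicate-free
   list [star x] with (e \in star x) = (o e == x); this is available exactly
   when all stars are finite (implied by bounded degree). *)
From mathcomp Require Import all_boot all_order all_algebra.
Set Implicit Arguments. Unset Strict Implicit. Unset Printing Implicit Defensive.
Import Order.TTheory GRing.Theory Num.Theory.

Section SerreGraph.
Variables (V E : eqType) (o t : E -> V) (rev : E -> E) (star : V -> seq E).

Definition is_serre_graph : Prop :=
  [/\ forall e, rev e != e,
      forall e, rev (rev e) = e,
      forall e, o e = t (rev e),
      forall x e, (e \in star x) = (o e == x)
    & forall x, uniq (star x)].

Definition deg (x : V) : nat := size (star x).

Definition is_path_from (x : V) (c : seq E) : bool :=
  match c with
  | [::] => true
  | e :: c' => (o e == x) && path (fun e f => t e == o f) e c'
  end.

Definition endp (x : V) (c : seq E) : V := last x (map t c).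

Definition no_backtracking (c : seq E) : bool :=
  match c with
  | [::] => true
  | e :: c' => path (fun e f => f != rev e) e c'
  end.

Definition has_tail (c : seq E) : bool :=
  match c with
  | [::] => false
  | e :: _ => last e c == rev e
  end.

Definition geodesic_loop (x : V) (c : seq E) : bool :=
  [&& is_path_from x c, endp x c == x & no_backtracking c].

Definition closed_geodesic (x : V) (c : seq E) : bool :=
  geodesic_loop x c && ~~ has_tail c.

Fixpoint paths_from (x : V) (n : nat) : seq (seq E) :=
  match n with
  | 0 => [:: [::]]
  | n'.+1 => flatten [seq [seq e :: c | c <- paths_from (t e) n'] | e <- star x]
  end.

Definition ck (k : nat) (x : V) : nat := count (geodesic_loop x) (paths_from x k).

Definition Nm (m : nat) (x : V) : nat := count (closed_geodesic x) (paths_from x m).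

Definition laplacian (f : V -> nat) (x : V) : int :=
  ((deg x)%:Z * (f x)%:Z - \sum_(e <- star x) (f (t e))%:Z)%R.

Definition connected : Prop :=
  forall x y, exists c, is_path_from x c && (endp x c == y).

Definition bounded_degree : Prop := exists D, forall x, deg x <= D.

End SerreGraph.

(* Sort the geodesic loops c of length n at the neighbours t(e), e in E_x, by
   whether e.c and c.(rev e) backtrack.  If neither does, e.c.(rev e) is a
   geodesic loop of length n+2 at x with a tail; if exactly one does, c is (up
   to reversal) a rotation of a closed geodesic path of length n at x; if both
   do, c = (rev e).c'.e for a geodesic loop c' at x, and a nonempty c' has
   deg(x) - 2 + [c' has a tail] such extensions.  Writing T_n for the number of
   loops with a tail, so that N_n = c_n - T_n, this gives a second-order
   recurrence for T_n whose solution is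
   T_m = (deg(x) - 2) * sum_i c_(m-2i) - sum_i i * (Delta c_(m-2i))(x). *)

From Pilot Require Import Defs.
From mathcomp Require Import all_boot all_order all_algebra zify ring.
Set Implicit Arguments. Unset Strict Implicit. Unset Printing Implicit Defensive.
Import Order.TTheory GRing.Theory Num.Theory.

Lemma count_bij (T1 T2 : eqType) (s1 : seq T1) (s2 : seq T2)
    (p1 : pred T1) (p2 : pred T2) (f : T1 -> T2) :
  uniq s1 -> uniq s2 -> injective f ->
  (forall c, c \in s1 -> p1 c -> f c \in s2 /\ p2 (f c)) ->
  (forall d, d \in s2 -> p2 d -> exists2 c, c \in s1 /\ p1 c & f c = d) ->
  count p1 s1 = count p2 s2.
Proof.
move=> uniq1 uniq2 f_inj into onto; rewrite -!size_filter -(size_map f).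
apply/perm_size/uniq_perm; rewrite ?map_inj_uniq ?filter_uniq //.
move=> d; rewrite mem_filter; apply/mapP/andP => [[c]|[p2d /onto]].
  by rewrite mem_filter => /andP[/into + s1c] ->; case=> // s2fc p2fc.
by move=> /(_ p2d)[c [s1c p1c] <-]; exists c; rewrite // mem_filter p1c.
Qed.

Lemma count_split4 (T : Type) (s : seq T) (a p q : pred T) :
  count a s = count (fun c => [&& a c, ~~ p c & ~~ q c]) s
            + count (fun c => [&& a c, p c & ~~ q c]) s
            + count (fun c => [&& a c, ~~ p c & q c]) s
            + count (fun c => [&& a c, p c & q c]) s.
Proof. by elim: s => //= c s ->; case: (a c) (p c) (q c) => [] [] []; lia. Qed.

Lemma count_neq2 (T : eqType) (s : seq T) (a b : T) :
  uniq s -> a \in s -> b \in s ->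
  count (fun e => (e != a) && (e != b)) s + 2 = size s + (a == b).
Proof.
move=> s_uniq sa sb; pose ab := predU (pred1 a) (pred1 b).
have cI : count (predI (pred1 a) (pred1 b)) s = (a == b).
  case: eqP => [<-|/eqP ab_neq].
    rewrite -[true]sa -(count_uniq_mem a s_uniq).
    by apply: eq_count => e /=; rewrite andbb.
  apply/eqP; rewrite -leqn0 leqNgt -has_count.
  by apply/hasP => -[e _ /andP[/eqP-> /eqP ab_eq]]; rewrite ab_eq eqxx in ab_neq.
have cU := count_predUI (pred1 a) (pred1 b) s.
rewrite !count_uniq_mem // sa sb cI in cU.
rewrite -(count_predC ab s) (eq_count (a2 := predC ab)); last by move=> e; rewrite /= negb_or.
rewrite /ab; lia.
Qed.

Lemma neq_nil_of_size (T : eqType) (c : seq T) n : 0 < n -> size c = n -> c != [::].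
Proof. by case: c => [n0 n0E|//]; rewrite -n0E in n0. Qed.

Lemma count_sum (T : Type) (a : pred T) (s : seq T) : count a s = \sum_(x <- s) a x.
Proof. by rewrite -sum1_count big_mkcond; apply: eq_bigr => x _; case: (a x). Qed.

Lemma sum_count_exchange (I J : Type) (s : seq I) (r : seq J) (Q : I -> pred J) :
  \sum_(i <- s) count (Q i) r = \sum_(j <- r) count (Q ^~ j) s.
Proof.
under eq_bigr do rewrite count_sum; rewrite exchange_big.
by apply: eq_bigr => j _; rewrite count_sum.
Qed.

Section LoopRecurrence.
Local Open Scope ring_scope.

Lemma sum_uphalfS (F : nat -> nat -> int) n : (0 < n)%N ->
  \sum_(1 <= i < uphalf n.+2) F i (n.+2 - 2 * i)%N
    = F 1%N n + \sum_(1 <= i < uphalf n) F i.+1 (n - 2 * i)%N.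
Proof.
move=> n0; rewrite [uphalf _]/= big_nat_recl; last by case: n n0.
by congr (F _ _ + _); [lia | apply: eq_bigr => i _; congr F; lia].
Qed.

Lemma sum_uphalf_small (F : nat -> int) n : (n <= 2)%N ->
  \sum_(1 <= i < uphalf n) F i = 0.
Proof. by move=> n2; rewrite big_geq //; case: n n2 => [|[|[|]]]. Qed.

Variables (d : int) (c lap T J : nat -> int).
Hypothesis T_small : forall n, (n <= 2)%N -> T n = 0.
Hypothesis J_small : forall n, (n <= 2)%N -> J n = 0.
Hypothesis J_rec : forall k, (0 < k)%N -> J k.+2 = (d - 2) * c k + T k.
Hypothesis T_rec : forall n, (0 < n)%N -> T n.+2 = (d - 2) * c n - lap n + 2 * T n - J n.

Local Notation A m := (\sum_(1 <= i < uphalf m) c (m - 2 * i)%N).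
Local Notation B m := (\sum_(1 <= i < uphalf m) i%:Z * lap (m - 2 * i)%N).
Local Notation G m := (\sum_(1 <= i < uphalf m) lap (m - 2 * i)%N).

Lemma loop_recurrence_solution m : T m = (d - 2) * A m - B m.
Proof.
have A_rec n : (0 < n)%N -> A n.+2 = c n + A n.
  by move=> n0; rewrite (sum_uphalfS (fun _ j => c j)).
have G_rec n : (0 < n)%N -> G n.+2 = lap n + G n.
  by move=> n0; rewrite (sum_uphalfS (fun _ j => lap j)).
have B_rec n : (0 < n)%N -> B n.+2 = lap n + B n + G n.
  move=> n0; rewrite (sum_uphalfS (fun i j => i%:Z * lap j)) // mul1r -addrA -big_split.
  by congr (_ + _); apply: eq_bigr => i _; rewrite -addn1 PoszD mulrDl mul1r.
elim/ltn_ind: m => m IH.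
have [m_le2|] := leqP m 2.
  by rewrite T_small // !sum_uphalf_small // mulr0 subr0.
case: m IH => [|[|n]] IH // n_gt0.
have {}n_gt0 : (0 < n)%N by [].
have J_eq : J n = T n + G n.
  have [n_le2|] := leqP n 2.
    by rewrite J_small // T_small // sum_uphalf_small // addr0.
  case: n n_gt0 IH => [|[|k]] // _ IH k_gt0.
  rewrite J_rec // (IH k.+2) // (IH k); last by lia.
  rewrite A_rec // B_rec // G_rec //.
  ring.
rewrite T_rec // J_eq (IH n) // A_rec // B_rec //.
ring.
Qed.

End LoopRecurrence.

Section SerreGraph.
Variables (V E : eqType) (o t : E -> V) (rv : E -> E) (star : V -> seq E).
Hypothesis rv_neq : forall e, rv e != e.
Hypothesis rvK : involutive rv.
Hypothesis o_rv : forall e, o e = t (rv e).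
Hypothesis mem_star : forall x e, (e \in star x) = (o e == x).
Hypothesis star_uniq : forall x, uniq (star x).

Lemma t_rv e : t e = o (rv e).
Proof. by rewrite o_rv rvK. Qed.

Lemma rv_inj : injective rv.
Proof. exact: inv_inj. Qed.

Local Notation pf := (is_path_from o t).
Local Notation ep := (endp t).
Local Notation NB := (no_backtracking rv).
Local Notation has_tail := (has_tail rv).
Local Notation GL := (geodesic_loop o t rv).
Local Notation CG := (closed_geodesic o t rv).
Local Notation P := (paths_from t star).
Local Notation ck := (ck o t rv star).
Local Notation Nm := (Nm o t rv star).

Definition starts_with (a : E) (c : seq E) : bool :=
  if c is e :: _ then e == a else false.

Definition ends_with (a : E) (c : seq E) : bool :=
  if c is e :: c' then last e c' == a else false.

Lemma starts_with_rcons a c z :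
  c != [::] -> starts_with a (rcons c z) = starts_with a c.
Proof. by case: c. Qed.

Lemma ends_with_rcons a c z : ends_with a (rcons c z) = (z == a).
Proof. by case: c => //= e c; rewrite last_rcons. Qed.

Lemma ends_with_cons a b c : b != a -> ends_with a (b :: c) = ends_with a c.
Proof. by case: c => [|e c] /= => [/negbTE|]. Qed.

Lemma is_path_from_cons x e c : pf x (e :: c) = (o e == x) && pf (t e) c.
Proof. by case: c => [|f c] /=; rewrite ?andbT // [o f == _]eq_sym. Qed.

Lemma is_path_from_rcons x c z : pf x (rcons c z) = pf x c && (o z == ep x c).
Proof.
case: c => [|e c] /=; first by rewrite andbT.
by rewrite rcons_path -andbA /endp /= last_map [o z == _]eq_sym.
Qed.

Lemma endp_cons x e c : ep x (e :: c) = ep (t e) c.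
Proof. by []. Qed.

Lemma endp_rcons x c z : ep x (rcons c z) = t z.
Proof. by rewrite /endp map_rcons last_rcons. Qed.

Lemma endp_cons_last x e c : ep x (e :: c) = t (last e c).
Proof. by rewrite /endp /= last_map. Qed.

Lemma no_backtracking_cons e c : NB (e :: c) = ~~ starts_with (rv e) c && NB c.
Proof. by case: c. Qed.

Lemma no_backtracking_rcons c z : NB (rcons c z) = NB c && ~~ ends_with (rv z) c.
Proof.
case: c => [|e c] //=; rewrite rcons_path; congr (_ && _).
by rewrite -(inj_eq rv_inj) rvK eq_sym.
Qed.

Lemma has_tail_rcons c z : has_tail (rcons c z) = starts_with (rv z) c.
Proof.
case: c => [|e c] /=; first by rewrite eq_sym (negbTE (rv_neq z)).
by rewrite last_rcons -(inj_eq rv_inj) rvK eq_sym.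
Qed.

Lemma geodesic_loop_wrap x e c : o e = x -> c != [::] ->
  GL x (e :: rcons c (rv e)) = [&& GL (t e) c, ~~ starts_with (rv e) c & ~~ ends_with e c].
Proof.
move=> oe c0; rewrite /geodesic_loop is_path_from_cons is_path_from_rcons.
rewrite no_backtracking_cons no_backtracking_rcons starts_with_rcons // rvK.
rewrite endp_cons endp_rcons -o_rv -t_rv oe !eqxx /= [t e == _]eq_sym.
by case: (pf _ c); case: (NB c); rewrite /= ?andbT ?andbF.
Qed.

Lemma closed_geodesic_rcons x e c : o e = x ->
  CG x (rcons c (rv e)) = GL (t e) (rv e :: c) && ~~ ends_with e c.
Proof.
move=> oe; rewrite /closed_geodesic /geodesic_loop is_path_from_cons is_path_from_rcons.
rewrite no_backtracking_cons no_backtracking_rcons has_tail_rcons endp_cons endp_rcons.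
rewrite -o_rv -t_rv oe rvK !eqxx [t e == _]eq_sym.
by case: (pf _ c) (ep _ c == _) (NB c) (starts_with e c) (ends_with e c) => [] [] [] [] [].
Qed.

Lemma mem_paths_from x n c : (c \in P x n) = pf x c && (size c == n).
Proof.
elim: n x c => [|n IH] x c /=.
  by rewrite inE; case: c => //= e c; rewrite andbF.
apply/flattenP/idP => [[_ /mapP[e es ->] /mapP[c' c'P ->]]|].
  by rewrite is_path_from_cons -(mem_star x) es /= -IH.
case: c => [|e c] //; rewrite is_path_from_cons /= eqSS -andbA => /andP[ox].
rewrite -IH => cP; exists [seq e :: c0 | c0 <- P (t e) n].
  by apply/mapP; exists e; rewrite ?mem_star.
by apply/mapP; exists c.
Qed.

Lemma mem_paths_from_geodesic x n c : GL x c -> (c \in P x n) = (size c == n).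
Proof. by rewrite mem_paths_from => /and3P[->]. Qed.

Lemma uniq_paths_from x n : uniq (P x n).
Proof.
elim: n x => [|n IH] x //=; elim: (star x) (star_uniq x) => //= e s IHs /andP[es us].
rewrite cat_uniq IHs // andbT map_inj_uniq ?IH //; last by move=> a b [].
apply/hasPn => _ /flattenP[_ /mapP[f fs ->] /mapP[c _ ->]].
by apply/mapP => -[c' _ [ef _]]; move: es; rewrite -ef fs.
Qed.

Lemma count_paths_fromS x n (Q : pred (seq E)) :
  count Q (P x n.+1) = \sum_(e <- star x) count (fun c => Q (e :: c)) (P (t e) n).
Proof.
rewrite /= count_flatten sumnE.
by rewrite !big_map; apply: eq_bigr => e _; rewrite count_map.
Qed.

Definition revp (c : seq E) : seq E := rev (map rv c).

Lemma revp_cons e c : revp (e :: c) = rcons (revp c) (rv e).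
Proof. by rewrite /revp /= rev_cons. Qed.

Lemma revpK : involutive revp.
Proof. by move=> c; rewrite /revp map_rev revK -map_comp (eq_map rvK) map_id. Qed.

Lemma size_revp c : size (revp c) = size c.
Proof. by rewrite size_rev size_map. Qed.

Lemma ends_with_revp a c : ends_with a (revp c) = starts_with (rv a) c.
Proof.
case: c => [|e c] //; rewrite revp_cons ends_with_rcons /=.
by rewrite -(inj_eq rv_inj) rvK eq_sym.
Qed.

Lemma starts_with_revp a c : starts_with a (revp c) = ends_with (rv a) c.
Proof. by rewrite -[c in RHS]revpK ends_with_revp rvK. Qed.

Lemma no_backtracking_revp c : NB (revp c) = NB c.
Proof.
elim: c => // e c IH.
rewrite revp_cons no_backtracking_rcons no_backtracking_cons IH.
by rewrite ends_with_revp rvK andbC.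
Qed.

Lemma is_path_from_revp x c :
  pf x c -> pf (ep x c) (revp c) && (ep (ep x c) (revp c) == x).
Proof.
elim: c x => [x _|e c IH x]; first exact: eqxx.
rewrite is_path_from_cons => /andP[/eqP <- /IH /andP[pc epc]].
by rewrite revp_cons is_path_from_rcons endp_rcons -t_rv -o_rv pc (eqP epc) !eqxx.
Qed.

Lemma geodesic_loop_revp y c : GL y c -> GL y (revp c).
Proof.
case/and3P=> pc /eqP epc nbc; have := is_path_from_revp pc; rewrite epc => /andP[pr er].
by rewrite /geodesic_loop pr er no_backtracking_revp.
Qed.

(* Pairs (e, c) with e in E_x and c a geodesic loop at t e such that e :: c
   backtracks iff p and rcons c (rv e) backtracks iff q. *)
Definition nbr_loops (x : V) (n : nat) (p q : bool) : nat :=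
  \sum_(e <- star x) count (fun c =>
    [&& GL (t e) c, starts_with (rv e) c == p & ends_with e c == q]) (P (t e) n).

Definition tailed_loops (x : V) (n : nat) : nat :=
  count (fun c => GL x c && has_tail c) (P x n).

Lemma sum_ck_nbr_loops x n : \sum_(e <- star x) ck n (t e) =
  nbr_loops x n false false + nbr_loops x n true false
  + nbr_loops x n false true + nbr_loops x n true true.
Proof.
rewrite /nbr_loops -!big_split; apply: eq_bigr => e _ /=.
rewrite /Defs.ck (count_split4 _ _ (starts_with (rv e)) (ends_with e)).
congr (_ + _ + _ + _); apply: eq_count => c.
all: by case: (starts_with _ c) (ends_with _ c) => [] [].
Qed.

Lemma nbr_loops_sym x n p q : nbr_loops x n p q = nbr_loops x n q p.
Proof.
apply: eq_bigr => e _.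
have revp_swap p' q' c : c \in P (t e) n ->
    [&& GL (t e) c, starts_with (rv e) c == p' & ends_with e c == q'] ->
    revp c \in P (t e) n /\
    [&& GL (t e) (revp c), starts_with (rv e) (revp c) == q' & ends_with e (revp c) == p'].
  move=> cP /and3P[GLc sc ec]; have GLc' := geodesic_loop_revp GLc.
  rewrite (mem_paths_from_geodesic n GLc') size_revp -(mem_paths_from_geodesic n GLc) cP.
  by rewrite GLc' starts_with_revp ends_with_revp rvK sc ec.
apply: (count_bij (f := revp)); rewrite ?uniq_paths_from //.
- exact: can_inj revpK.
- exact: revp_swap.
- by move=> d /revp_swap/[apply] dP; exists (revp d); rewrite ?revpK.
Qed.

Lemma nbr_loops_ff x n : 0 < n -> nbr_loops x n false false = tailed_loops x n.+2.
Proof.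
move=> n0; rewrite /nbr_loops /tailed_loops count_paths_fromS big_seq_cond [RHS]big_seq_cond.
apply: eq_bigr => e /andP[/[!mem_star] /eqP oe _].
apply: (count_bij (f := rcons^~ (rv e))); rewrite ?uniq_paths_from //.
- exact: rcons_injl.
- move=> c /[!mem_paths_from] /andP[_ /eqP sc] /and3P[GLc /eqP sc' /eqP ec].
  have GLw : GL x (e :: rcons c (rv e)).
    by rewrite geodesic_loop_wrap ?(neq_nil_of_size n0 sc) // GLc sc' ec.
  have /and3P[+ _ _] := GLw; rewrite is_path_from_cons => /andP[_ ->].
  by rewrite size_rcons sc GLw /= last_rcons.
- move=> d /[!mem_paths_from] /andP[_ /eqP]; case/lastP: d => // c z.
  rewrite size_rcons => -[sc] /andP[GLw]; rewrite /= last_rcons => /eqP ze; subst z.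
  move: GLw; rewrite geodesic_loop_wrap ?(neq_nil_of_size n0 sc) // => /and3P[GLc sc' ec].
  exists c => //; rewrite mem_paths_from_geodesic // sc GLc.
  by rewrite (negbTE sc') (negbTE ec).
Qed.

Definition prepend_spur (d : seq E) : seq E :=
  if d is h :: s then rv (last h s) :: last h s :: belast h s else [::].

Lemma prepend_spur_rcons c z : prepend_spur (rcons c z) = rv z :: z :: c.
Proof. by case: c => [|h c] //=; rewrite last_rcons belast_rcons. Qed.

Lemma prepend_spur_inj : injective prepend_spur.
Proof.
move=> d1 d2; case/lastP: d1 => [|c1 z1]; case/lastP: d2 => [|c2 z2] //;
  by rewrite ?prepend_spur_rcons //= => -[_ -> ->].
Qed.

Lemma nbr_loops_tf x n : 0 < n -> nbr_loops x n true false = Nm n x.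
Proof.
move=> n0; pose Q d := if d is e :: c then
  [&& GL (t e) c, starts_with (rv e) c == true & ends_with e c == false] else false.
transitivity (count Q (P x n.+1)); first by rewrite count_paths_fromS.
symmetry; apply: (count_bij (f := prepend_spur)); rewrite ?uniq_paths_from //.
- exact: prepend_spur_inj.
- move=> d /[!mem_paths_from] /andP[_ /eqP sd].
  case/lastP: d sd => [sd|c z]; first by rewrite -sd in n0.
  rewrite size_rcons prepend_spur_rcons => -[sc] CGd.
  have oz : o (rv z) = x.
    by case/andP: CGd => /and3P[_ /eqP + _]; rewrite endp_rcons o_rv rvK.
  move: CGd; rewrite -[z]rvK closed_geodesic_rcons // rvK => /andP[GLc ec].
  have ez : ends_with (rv z) (z :: c) = ends_with (rv z) c.
    by rewrite ends_with_cons // eq_sym rv_neq.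
  split; last by rewrite /= rvK eqxx -/(ends_with (rv z) (z :: c)) ez (negbTE ec) GLc.
  by rewrite is_path_from_cons oz eqxx /= sc eqxx andbT; case/and3P: GLc.
- case=> [//|e c] /[!mem_paths_from]; rewrite is_path_from_cons.
  move=> /andP[/andP[/eqP oe _] /eqP sc] /and3P[GLc /eqP st /eqP/negbT ec].
  case: c sc GLc st ec => [//|f c] [sc] GLc /eqP fe; subst f.
  rewrite ends_with_cons ?rv_neq // => ec.
  exists (rcons c (rv e)); last by rewrite prepend_spur_rcons rvK.
  have CGc : CG x (rcons c (rv e)) by rewrite closed_geodesic_rcons // GLc.
  by rewrite mem_paths_from size_rcons sc eqxx andbT; split; last by [];
    case/andP: CGc => /and3P[].
Qed.

Lemma count_star_wrap x c : GL x c -> c != [::] ->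
  count (fun e => ~~ starts_with e c && ~~ ends_with (rv e) c) (star x) + 2
    = deg star x + has_tail c.
Proof.
case: c => [//|f c] /and3P[]; rewrite is_path_from_cons endp_cons_last.
move=> /andP[ofx _] /eqP tl _ _.
have rv_eq a b : (a == rv b) = (rv a == b) by rewrite -(inj_eq rv_inj) rvK.
rewrite (eq_count (a2 := fun e => (e != f) && (e != rv (last f c)))); last first.
  by move=> e /=; rewrite eq_sym [_ == rv e]eq_sym rv_eq eq_sym.
rewrite count_neq2 ?mem_star ?ofx ?o_rv ?rvK ?tl //.
by rewrite /Defs.has_tail /= rv_eq eq_sym.
Qed.

Lemma nbr_loops_tt_unwrap x k : 0 < k ->
  nbr_loops x k.+2 true true = \sum_(e <- star x)
    count (fun c => [&& GL x c, ~~ starts_with e c & ~~ ends_with (rv e) c]) (P x k).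
Proof.
move=> k0; rewrite /nbr_loops big_seq [RHS]big_seq; apply: eq_bigr => e /[!mem_star] /eqP oe.
have wrapE c : c != [::] ->
    GL (t e) (rv e :: rcons c e) = [&& GL x c, ~~ starts_with e c & ~~ ends_with (rv e) c].
  by move=> c0; have := geodesic_loop_wrap (esym (t_rv e)) c0; rewrite rvK -o_rv oe.
symmetry; apply: (count_bij (f := fun c => rv e :: rcons c e)); rewrite ?uniq_paths_from //.
- by move=> c1 c2 [] /rcons_inj[].
- move=> c /[!mem_paths_from] /andP[_ /eqP sc] GLc.
  rewrite -wrapE ?(neq_nil_of_size k0 sc) // in GLc.
  by case/and3P: (GLc) => -> _ _; rewrite /= size_rcons sc GLc last_rcons !eqxx.
- case=> [|f d] /[!mem_paths_from] /andP[_ /eqP] //= [sd].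
  case/lastP: d sd => [//|c z]; rewrite size_rcons => -[sc] /and3P[+ /eqP/eqP fe].
  rewrite /= last_rcons => + /eqP/eqP ze; subst f z.
  rewrite wrapE ?(neq_nil_of_size k0 sc) // => GLc.
  exists c => //; split => //.
  by rewrite mem_paths_from sc eqxx andbT; case/and3P: GLc => /and3P[].
Qed.

Lemma nbr_loops_tt x k : 0 < k ->
  nbr_loops x k.+2 true true + 2 * ck k x = deg star x * ck k x + tailed_loops x k.
Proof.
move=> k0; rewrite nbr_loops_tt_unwrap // sum_count_exchange /Defs.ck /tailed_loops.
rewrite !count_sum !big_distrr -!big_split /=.
apply: eq_big_seq => c /[!mem_paths_from] /andP[_ /eqP sc].
case GLc: (GL x c) => /=; last by rewrite !muln0 addn0 (@eq_count _ _ pred0) ?count_pred0.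
by rewrite !muln1 count_star_wrap ?(neq_nil_of_size k0 sc).
Qed.

Lemma tailed_loops_small x n : n <= 2 -> tailed_loops x n = 0.
Proof.
move=> n2; rewrite /tailed_loops (eq_in_count (a2 := pred0)) ?count_pred0 //.
move=> c /[!mem_paths_from] /andP[_ /eqP sc]; apply/negbTE/negP => /andP[/and3P[_ _]].
move: n2; rewrite -{}sc; case: c => [|f [|g [|h c]]] //= _.
  by rewrite eq_sym (negbTE (rv_neq f)).
by rewrite andbT => /negbTE ->.
Qed.

Lemma nbr_loops_tt_small x n : n <= 2 -> nbr_loops x n true true = 0.
Proof.
move=> n2; rewrite /nbr_loops big1 // => e _.
rewrite (eq_in_count (a2 := pred0)) ?count_pred0 //.
move=> c /[!mem_paths_from] /andP[_ /eqP sc]; apply/negbTE/negP => /and3P[/and3P[_ _]].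
move: n2; rewrite -{}sc; case: c => [|f [|g [|h c]]] //= _ nb /eqP/eqP fe /eqP/eqP ge.
  by move: (rv_neq e); rewrite -fe ge eqxx.
by move: nb; rewrite fe ge rvK eqxx.
Qed.

Lemma Nm_add_tailed x n : Nm n x + tailed_loops x n = ck n x.
Proof.
rewrite /Defs.Nm /tailed_loops /Defs.ck /closed_geodesic.
by elim: (P x n) => //= c s <-; case: (GL x c) (has_tail c) => [] []; lia.
Qed.

Local Open Scope ring_scope.

Lemma tailed_loops_rec x n : (0 < n)%N ->
  (tailed_loops x n.+2)%:Z =
    ((deg star x)%:Z - 2) * (ck n x)%:Z - laplacian t star (ck n) x
    + 2 * (tailed_loops x n)%:Z - (nbr_loops x n true true)%:Z.
Proof.
move=> n0; rewrite /laplacian -(big_morph Posz PoszD (erefl 0%:Z)) sum_ck_nbr_loops.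
rewrite nbr_loops_ff // (nbr_loops_sym x n false true) nbr_loops_tf //.
rewrite -(Nm_add_tailed x n) !PoszD.
ring.
Qed.

Lemma nbr_loops_tt_rec x k : (0 < k)%N ->
  (nbr_loops x k.+2 true true)%:Z =
    ((deg star x)%:Z - 2) * (ck k x)%:Z + (tailed_loops x k)%:Z.
Proof.
by move=> k0; have := congr1 Posz (nbr_loops_tt x k0); rewrite !PoszD !PoszM; lia.
Qed.

Theorem Nm_closed_form x m :
  (Nm m x)%:Z = (ck m x)%:Z
    - ((deg star x)%:Z - 2) * \sum_(1 <= i < uphalf m) (ck (m - 2 * i) x)%:Z
    + \sum_(1 <= i < uphalf m) i%:Z * laplacian t star (ck (m - 2 * i)) x.
Proof.
have := congr1 Posz (Nm_add_tailed x m); rewrite PoszD.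
rewrite (@loop_recurrence_solution (deg star x)%:Z (fun n => (ck n x)%:Z)
  (fun n => laplacian t star (ck n) x) (fun n => (tailed_loops x n)%:Z)
  (fun n => (nbr_loops x n true true)%:Z)).
- by move=> <-; ring.
- by move=> n n_le2; rewrite /= tailed_loops_small.
- by move=> n n_le2; rewrite /= nbr_loops_tt_small.
- exact: nbr_loops_tt_rec.
- exact: tailed_loops_rec.
Qed.

End SerreGraph.

Theorem proposition3p2 (V : countType) (E : eqType) (o t : E -> V)
    (rev : E -> E) (star : V -> seq E)
    (HX : is_serre_graph o t rev star)
    (Hconn : connected o t)
    (Hbd : bounded_degree star)
    (Hdeg1 : forall x, deg star x != 1%N)
    (x0 : V) (m : nat) (Hm : (2 < m)%N) :
  ((Nm o t rev star m x0)%:Z =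
     (ck o t rev star m x0)%:Z
     - ((deg star x0)%:Z - 2) *
         \sum_(1 <= i < uphalf m) (ck o t rev star (m - 2 * i) x0)%:Z
     + \sum_(1 <= i < uphalf m)
         i%:Z * laplacian t star (ck o t rev star (m - 2 * i)) x0)%R.
Proof.
by case: HX => rv_neq rvK o_rv mem_star star_uniq; apply: Nm_closed_form.
Qed.
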